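(* Let $2\le n\le l$ be integers and let $L_l=\{a_1<\dots<a_l\}$ be the linearly ordered semilattice of $l$ elements. Let $Eq(n)$ be the set of equations in the variables $X=\{x_1,\dots,x_n\}$, where an equation $t(X)=s(X)$ is identified with the ordered pair $(\mathrm{Var}(t),\mathrm{Var}(s))$ of nonempty subsets of $X$ with $\mathrm{Var}(t)\cup\mathrm{Var}(s)=X$ (so $|Eq(n)|=3^n-2$). For each equation let $\mathrm{Irr}$ denote the number of irreducible components of its solution set in $L_l^n$. Then the average of $\mathrm{Irr}$ over $Eq(n)$ is $$\overline{\mathrm{Irr}}(n)=\frac{4\,n!\,3^{n-2}}{3^n-2},$$ in particular $\overline{\mathrm{Irr}}(n)\sim \frac{4}{9}n!$ as $n\to\infty$; this value does not depend on $l$.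
   Context: $L_l$ has multiplication $a_ia_j=a_{\min(i,j)}$. A term is a commutative word in $x_1,\dots,x_n$; $\mathrm{Var}(t)$ is the set of variables occurring in $t$; the solution set of $t(X)=s(X)$ depends only on $\mathrm{Var}(t)$ and $\mathrm{Var}(s)$. Equations are ordered pairs, so $t=s$ and $s=t$ are counted as different equations. $P\in L_l^n$ is a solution if $t(P)=s(P)$. For a system $S$, $V(S)$ is its set of common solutions; $Y\subseteq L_l^n$ is algebraic if $Y=V(S)$ for some system $S$; an algebraic set is irreducible if it is not a proper finite union of other algebraic sets. Every algebraic set is uniquely (up to order) a finite union $Y_1\cup\dots\cup Y_m$ of irreducible algebraic sets with $Y_i\not\subseteq Y_j$ for $i\ne j$; these are its irreducible components. *)

From mathcomp Require Import all_boot all_order all_algebra.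
Set Implicit Arguments. Unset Strict Implicit. Unset Printing Implicit Defensive.

(* L_l = {a_1 < ... < a_l} is modelled by 'I_l (a_{i+1} <-> i), with
   multiplication a_i a_j = a_{min(i,j)}.  A term (commutative word in x_1..x_n) only
   matters through its nonempty variable set A : {set 'I_n}; its value at P
   is the product (= minimum) of the P i, i in A. *)

Definition point (n l : nat) := {ffun 'I_n -> 'I_l}.
Definition equation (n : nat) := ({set 'I_n} * {set 'I_n})%type.

Definition term_val n l (A : {set 'I_n}) (P : point n l) : nat :=
  \big[minn/l]_(i in A) (P i : nat).

Definition is_equation n (e : equation n) : bool :=
  (e.1 != set0) && (e.2 != set0).

Definition solutions n l (e : equation n) : {set point n l} :=
  [set P | term_val e.1 P == term_val e.2 P].

Definition V n l (S : {set equation n}) : {set point n l} :=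
  [set P | [forall e in S, P \in solutions l e]].

Definition algebraic n l (Y : {set point n l}) : bool :=
  [exists S : {set equation n},
     [forall e in S, is_equation e] && (Y == V l S)].

Definition irreducible n l (Y : {set point n l}) : bool :=
  algebraic Y &&
  [forall F : {set {set point n l}},
     ([forall Z in F, algebraic Z] && (Y == cover F)) ==> (Y \in F)].

Definition irr_decomp n l (Y : {set point n l}) (C : {set {set point n l}}) : bool :=
  [forall Z in C, irreducible Z] && (Y == cover C) &&
  [forall Z1 in C, forall Z2 in C, (Z1 != Z2) ==> ~~ (Z1 \subset Z2)].

(* number of irreducible components (unique by the decomposition theorem) *)
Definition Irr n l (Y : {set point n l}) : nat :=
  odflt 0 (omap (fun C : {set {set point n l}} => #|C|) [pick C | irr_decomp Y C]).

Definition Eqn (n : nat) : {set equation n} :=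
  [set e : equation n | is_equation e & e.1 :|: e.2 == setT].

From mathcomp Require Import all_boot all_order all_algebra all_fingroup.
From mathcomp Require Import zify.
Set Implicit Arguments. Unset Strict Implicit. Unset Printing Implicit Defensive.

(* A solution set is algebraic, and every algebraic subset of L_l^n is the union of the order
   cones [cone q] = {p | q_i <= q_j -> p_i <= p_j} of its points.  Cones are irreducible, so
   the irreducible components are the maximal cones.  For an equation with variable sets A, B
   covering X, a point is a solution iff the least coordinate is attained both in A and in B;
   the maximal cones are then those of the points ranking the variables by a permutation s
   whose least variable lies in A :&: B, or whose two least variables, one in A :\: B and one in
   B :\: A, are tied (n <= l leaves room for these n levels).  The ranking is recovered from
   the cone, so Irr counts such s.  Encoding an equation by x |-> (x \in A, x \in B), a fixed s
   is admissible for 3^(n-1) + 3^(n-2) equations; summing over the n! permutations gives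
   4 n! 3^(n-2), while |Eq(n)| = 3^n - 2. *)

Section PermutationRanks.
Variable n : nat.
Implicit Types (s : 'S_n) (f g key : 'I_n -> nat).

Lemma card_ord_lt m : m <= n -> #|[set k : 'I_n | k < m]| = m.
Proof.
move=> le_mn; have -> : [set k : 'I_n | k < m] = widen_ord le_mn @: [set: 'I_m].
  apply/setP=> k; rewrite inE; apply/idP/imsetP => [lt_km|[k' _ ->]]; last first.
    by rewrite /= ltn_ord.
  by exists (Ordinal lt_km); rewrite ?inE //; apply: val_inj.
by rewrite card_imset ?cardsT ?card_ord // => a b [] /val_inj.
Qed.

Lemma card_perm_lt s m : m <= n -> #|[set j | s j < m]| = m.
Proof.
move=> le_mn; rewrite -[RHS](card_ord_lt le_mn) -[RHS](card_preimset _ (@perm_inj _ s)).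
by apply: eq_card => j; rewrite !inE.
Qed.

Lemma perm_surj_nat s m : m < n -> exists a, s a = m :> nat.
Proof. by move=> lt_mn; exists ((s^-1)%g (Ordinal lt_mn)); rewrite permKV. Qed.

Lemma perm_inj_nat s i j : s i = s j :> nat -> i = j.
Proof. by move/val_inj/perm_inj. Qed.

Definition below f k := #|[set j | f j < f k]|.

Lemma eq_below f g k : (forall i j, (f i <= f j) = (g i <= g j)) -> below f k = below g k.
Proof. by move=> fg; apply: eq_card => j; rewrite !inE !ltnNge fg. Qed.

Lemma perm_of_injective_key key : injective key ->
  exists s, forall i j, (s i < s j) = (key i < key j).
Proof.
move=> key_inj.
have below_lt i : below key i < n.
  have sub : [set j | key j < key i] \subset [set~ i].
    by apply/subsetP=> j; rewrite !inE; apply: contraTneq => ->; rewrite ltnn.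
  apply: leq_ltn_trans (subset_leq_card sub) _; rewrite cardsC1 card_ord.
  by case: n i {sub} => [[]|m].
have below_mono i j : key i < key j -> below key i < below key j.
  move=> lt_ij; apply: proper_card; rewrite properE; apply/andP; split.
    by apply/subsetP=> k; rewrite !inE => /ltn_trans; apply.
  by apply/subsetPn; exists i; rewrite !inE ?lt_ij ?ltnn.
have below_ltE i j : (below key i < below key j) = (key i < key j).
  apply/idP/idP => [|/below_mono//]; case: (ltngtP (key i) (key j)) => // [lt_ji|/key_inj ->].
    by move/ltn_trans/(_ (below_mono _ _ lt_ji)); rewrite ltnn.
  by rewrite ltnn.
have r_inj : injective (fun i => Ordinal (below_lt i)).
  move=> i j /(congr1 val) /= eq_ij; apply: key_inj.
  by case: (ltngtP (key i) (key j)) => // /below_mono; rewrite eq_ij ltnn.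
by exists (perm r_inj) => i j; rewrite !permE; apply: below_ltE.
Qed.

Lemma exists_linear_extension key :
  exists s, forall i j, key i < key j -> s i < s j.
Proof.
have key'_inj : injective (fun i : 'I_n => key i * n + i).
  move=> i j /(congr1 (modn^~ n)); rewrite !modnMDl !modn_small //.
  by move/val_inj.
have [s sE] := perm_of_injective_key key'_inj.
exists s => i j lt_ij; rewrite sE (@leq_trans ((key i).+1 * n)) //.
  by rewrite mulSnr ltn_add2l.
by rewrite (leq_trans _ (leq_addr _ _)) // leq_mul2r lt_ij orbT.
Qed.

Lemma linear_extension_leq s key f :
    (forall i j, key i < key j -> s i < s j) -> (forall i j, f i < f j -> key i < key j) ->
  forall i j, s i <= s j -> f i <= f j.
Proof. by move=> s_ext f_key i j; apply: contraTT; rewrite -!ltnNge => /f_key/s_ext. Qed.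

Lemma perm_at_strict_key s key b :
    (forall i j, key i < key j -> s i < s j) -> (forall x, key x = key b -> x = b) ->
  s b = #|[set x | key x < key b]| :> nat.
Proof.
move=> s_ext key_b; rewrite -{1}(card_perm_lt s (ltnW (ltn_ord (s b)))).
apply: eq_card => x; rewrite !inE.
apply/idP/idP => [lt_xb|/s_ext//]; case: (ltngtP (key x) (key b)) => // [/s_ext|/key_b eq_xb].
  by move/(ltn_trans lt_xb); rewrite ltnn.
by move: lt_xb; rewrite eq_xb ltnn.
Qed.

End PermutationRanks.

Lemma set_neq0 (T : finType) (A : {set T}) x : x \in A -> A != set0.
Proof. by move=> xA; apply/set0Pn; exists x. Qed.

Lemma forall_in_set1 (T : finType) (a : T) (P : pred T) : [forall x in [set a], P x] = P a.
Proof. by apply/forall_inP/idP => [/(_ a (set11 a))|Pa x /set1P->]. Qed.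

Lemma forall_in_set2 (T : finType) (a b : T) (P : pred T) :
  [forall x in [set a; b], P x] = P a && P b.
Proof.
apply/forall_inP/andP => [all_P|[Pa Pb] x]; first by rewrite !all_P ?set21 ?set22.
by case/set2P=> ->.
Qed.

Lemma double_count_card (I J : finType) (P : pred I) (G : I -> {set J}) :
  \sum_(i in P) #|G i| = \sum_j #|[set i in P | j \in G i]|.
Proof.
transitivity (\sum_(i in P) \sum_(j in G i) 1); first by apply: eq_bigr => i _; rewrite sum1_card.
rewrite (exchange_big_dep xpredT) //=; apply: eq_bigr => j _.
by rewrite sum1dep_card; apply: eq_card => i; rewrite !inE.
Qed.

Lemma bigmin_seq_leq (I : eqType) (r : seq I) (P : pred I) (F : I -> nat) m j :
  j \in r -> P j -> \big[minn/m]_(i <- r | P i) F i <= F j.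
Proof.
elim: r => // x r IHr; rewrite inE big_cons => /orP[/eqP<- ->|jr Pj]; first exact: geq_minl.
by case: ifP => _; rewrite ?(leq_trans (geq_minr _ _)) ?(IHr jr Pj).
Qed.

Lemma bigmin_seq_cases (I : Type) (r : seq I) (P : pred I) (F : I -> nat) m :
  \big[minn/m]_(i <- r | P i) F i = m \/
  exists2 i, P i & \big[minn/m]_(i <- r | P i) F i = F i.
Proof.
apply: (big_ind (fun x => x = m \/ exists2 i, P i & x = F i)); [by left| |by right; exists i].
by move=> x y Hx Hy; case: leqP.
Qed.

Section Cones.
Variables n l : nat.
Implicit Types (p q : point n l) (A : {set 'I_n}) (e : equation n)
  (S : {set equation n}) (Y Z W : {set point n l}) (C D : {set {set point n l}}).

Lemma term_val_le A p j : j \in A -> term_val A p <= p j.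
Proof. by move=> jA; apply: bigmin_seq_leq; rewrite ?mem_index_enum. Qed.

Lemma term_val_attained A p : A != set0 -> exists2 i, i \in A & term_val A p = p i.
Proof.
case/set0Pn=> j jA; case: (bigmin_seq_cases (index_enum 'I_n) (mem A) (fun i => val (p i)) l).
  by move=> tv_l; have := term_val_le p jA; rewrite /term_val tv_l leqNgt ltn_ord.
by case=> i; exists i.
Qed.

Lemma term_val_eq0 A p i : i \in A -> p i = 0 :> nat -> term_val A p = 0.
Proof. by move=> iA pi0; apply/eqP; rewrite -leqn0 -pi0 term_val_le. Qed.

Lemma term_val1 i p : term_val [set i] p = p i.
Proof.
by have [k] := term_val_attained p (set_neq0 (set11 i)); rewrite inE => /eqP->.
Qed.

Lemma term_val2 i j p : term_val [set i; j] p = minn (p i) (p j).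
Proof.
apply/eqP; rewrite eqn_leq leq_min !term_val_le ?set21 ?set22 //=.
have [k] := term_val_attained p (set_neq0 (set21 i j)).
by rewrite !inE => /orP[]/eqP-> ->; rewrite ?geq_minl ?geq_minr.
Qed.

Definition cone q : {set point n l} :=
  [set p : point n l | [forall i, forall j, (q i <= q j) ==> (p i <= p j)]].

Lemma coneP q p : reflect (forall i j, q i <= q j -> p i <= p j) (p \in cone q).
Proof.
rewrite inE; apply: (iffP forallP) => [le_p i j|le_p i].
  by move/forallP: (le_p i) => /(_ j)/implyP.
by apply/forallP=> j; apply/implyP/le_p.
Qed.

Lemma cone_id q : q \in cone q.
Proof. exact/coneP. Qed.

Lemma cone_sub p q : p \in cone q -> cone p \subset cone q.
Proof. by move/coneP=> le_p; apply/subsetP=> r /coneP le_r; apply/coneP=> i j /le_p/le_r. Qed.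

Lemma term_val_cone A q :
  A != set0 -> exists2 i, i \in A & {in cone q, forall p, term_val A p = p i}.
Proof.
move=> A0; have [i iA tv_q] := term_val_attained q A0; exists i => // p /coneP le_p.
have [k kA tv_p] := term_val_attained p A0; apply/eqP; rewrite eqn_leq term_val_le //=.
by rewrite tv_p; apply: le_p; rewrite -tv_q term_val_le.
Qed.

Lemma solutions_cone e q :
  is_equation e -> q \in solutions l e -> cone q \subset solutions l e.
Proof.
case: e => A B /andP[/= A0 B0]; rewrite inE /= => /eqP tv_q.
have [i iA tvA] := term_val_cone q A0; have [j jB tvB] := term_val_cone q B0.
have q_ij : q i = q j :> nat by rewrite -tvA ?cone_id // -tvB ?cone_id.
apply/subsetP=> p p_q; rewrite inE /= tvA // tvB //.
by move/coneP: p_q => le_p; rewrite eqn_leq !le_p ?q_ij.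
Qed.

Lemma cone_eq_leq p q : cone p = cone q -> forall i j, (p i <= p j) = (q i <= q j).
Proof.
move=> eq_pq i j; have /coneP le_q : q \in cone p by rewrite eq_pq cone_id.
have /coneP le_p : p \in cone q by rewrite -eq_pq cone_id.
by apply/idP/idP => [/le_q|/le_p].
Qed.

Lemma in_VP S p : reflect (forall e, e \in S -> p \in solutions l e) (p \in V l S).
Proof. by rewrite inE; apply: (iffP forallP) => in_p e; apply/implyP/in_p. Qed.

Lemma algebraicP Y :
  reflect (exists2 S : {set equation n}, {in S, forall e, is_equation e} & Y = V l S)
          (algebraic Y).
Proof.
apply: (iffP existsP) => [[S /andP[/forallP wf /eqP ->]]|[S wf ->]]; exists S => //.
  by move=> e; apply/implyP/wf.
by rewrite eqxx andbT; apply/forallP=> e; apply/implyP/wf.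
Qed.

Lemma algebraic_solutions e : is_equation e -> algebraic (solutions l e).
Proof.
move=> wf_e; apply/algebraicP; exists [set e]; first by move=> _ /set1P ->.
by apply/setP=> p; apply/idP/in_VP => [pe _ /set1P ->|/(_ e (set11 e))].
Qed.

Lemma algebraic_cone_sub Y q : algebraic Y -> q \in Y -> cone q \subset Y.
Proof.
case/algebraicP=> S wf -> /in_VP q_S; apply/subsetP=> p p_q; apply/in_VP=> e eS.
exact: subsetP (solutions_cone (wf e eS) (q_S e eS)) p p_q.
Qed.

Lemma solutions_le i j p : (p \in solutions l ([set i], [set i; j])) = (p i <= p j).
Proof.
rewrite inE /= term_val1 term_val2 eq_sym.
by apply/eqP/idP => [<-|/minn_idPl//]; apply: geq_minr.
Qed.

Lemma algebraic_cone q : algebraic (cone q).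
Proof.
apply/algebraicP; exists [set ([set i], [set i; j]) | i : 'I_n, j : 'I_n in [set j | q i <= q j]].
  move=> _ /imset2P[i j _ _ ->].
  by rewrite /is_equation (set_neq0 (set11 i)) (set_neq0 (set21 i j)).
apply/setP=> p; apply/coneP/in_VP => [le_p e /imset2P[i j _]|in_p i j le_ij].
  by rewrite inE => le_ij ->; rewrite solutions_le; apply: le_p.
by rewrite -solutions_le; apply: in_p; apply/imset2P; exists i j; rewrite ?inE.
Qed.

Lemma algebraicI Y Z : algebraic Y -> algebraic Z -> algebraic (Y :&: Z).
Proof.
case/algebraicP=> S wfS ->; case/algebraicP=> T wfT ->; apply/algebraicP.
exists (S :|: T); first by move=> e; rewrite inE => /orP[/wfS|/wfT].
apply/setP=> p; rewrite inE; apply/andP/in_VP => [[/in_VP pS /in_VP pT] e|pST].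
  by rewrite inE => /orP[/pS|/pT].
by split; apply/in_VP => e eS; apply: pST; rewrite inE eS ?orbT.
Qed.

Lemma cone_irreducible q : irreducible (cone q).
Proof.
rewrite /irreducible algebraic_cone; apply/forallP=> F.
apply/implyP=> /andP[/forall_inP algF /eqP qF].
have /bigcupP[Z ZF qZ] : q \in cover F by rewrite -qF cone_id.
suff <- : Z = cone q by [].
by apply/eqP; rewrite eqEsubset (algebraic_cone_sub (algF _ ZF) qZ) andbT qF bigcup_sup.
Qed.

Lemma irreducible_sub_cover Z D :
    irreducible Z -> {in D, forall W, algebraic W} -> Z \subset cover D ->
  exists2 W, W \in D & Z \subset W.
Proof.
case/andP=> algZ /forallP/(_ [set Z :&: W | W in D])/implyP irrZ algD ZD.
have : Z \in [set Z :&: W | W in D].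
  apply: irrZ; apply/andP; split.
    by apply/forall_inP=> _ /imsetP[W WD ->]; apply: algebraicI (algD W WD).
  apply/eqP/setP=> x; apply/idP/bigcupP => [xZ|[_ /imsetP[W _ ->] /setIP[]//]].
  have /bigcupP[W WD xW] := subsetP ZD x xZ.
  by exists (Z :&: W); [apply: imset_f | rewrite inE xZ].
by case/imsetP=> W WD eqZ; exists W; rewrite // eqZ subsetIr.
Qed.

Lemma irr_decompP Y C :
  reflect [/\ {in C, forall Z, irreducible Z}, Y = cover C &
              {in C &, forall Z1 Z2, Z1 \subset Z2 -> Z1 = Z2}]
          (irr_decomp Y C).
Proof.
apply: (iffP andP) => [[/andP[/forall_inP irrC /eqP ->] /forall_inP antiC]|[irrC -> antiC]].
  split=> // Z1 Z2 Z1C Z2C sub12; apply/eqP; apply: contraTT sub12 => neq12.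
  by move: (forall_inP (antiC _ Z1C) _ Z2C) => /implyP; apply.
split; first by rewrite eqxx andbT; apply/forall_inP.
apply/forall_inP=> Z1 Z1C; apply/forall_inP=> Z2 Z2C; apply/implyP.
by apply: contra => sub12; apply/eqP/antiC.
Qed.

Lemma irr_decomp_sub Y C D : irr_decomp Y C -> irr_decomp Y D -> C \subset D.
Proof.
move=> /irr_decompP[irrC YC antiC] /irr_decompP[irrD YD _]; apply/subsetP=> Z ZC.
have algC : {in C, forall W, algebraic W} by move=> W /irrC /andP[].
have algD : {in D, forall W, algebraic W} by move=> W /irrD /andP[].
have [W WD ZW] : exists2 W, W \in D & Z \subset W.
  by apply: irreducible_sub_cover (irrC Z ZC) algD _; rewrite -YD YC bigcup_sup.
have [Z' Z'C WZ'] : exists2 Z', Z' \in C & W \subset Z'.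
  by apply: irreducible_sub_cover (irrD W WD) algC _; rewrite -YC YD bigcup_sup.
have eqZZ' := antiC Z Z' ZC Z'C (subset_trans ZW WZ').
suff -> : Z = W by [].
by apply/eqP; rewrite eqEsubset ZW eqZZ'.
Qed.

Lemma IrrE Y C : irr_decomp Y C -> Irr Y = #|C|.
Proof.
move=> YC; rewrite /Irr; case: pickP => [D YD|/(_ C)]; last by rewrite YC.
suff -> : D = C by [].
by apply/eqP; rewrite eqEsubset !(irr_decomp_sub YC, irr_decomp_sub YD).
Qed.

Definition cone_maximal Y q := (q \in Y) && [forall p in Y, (q \in cone p) ==> (p \in cone q)].

Lemma cone_maximal_cover Y p :
  algebraic Y -> p \in Y -> exists2 q, cone_maximal Y q & p \in cone q.
Proof.
move=> algY pY; have Pp : (p \in Y) && (p \in cone p) by rewrite pY cone_id.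
case: (@arg_maxnP _ p (fun q => (q \in Y) && (p \in cone q)) (fun q => #|cone q|) Pp).
move=> q /andP[qY pq] max_q; exists q => //.
rewrite /cone_maximal qY; apply/forall_inP=> r rY; apply/implyP=> qr.
have sub_qr := cone_sub qr.
have pr : p \in cone r := subsetP sub_qr p pq.
have -> : cone q = cone r by apply/eqP; rewrite eqEcard sub_qr; apply: max_q; rewrite rY.
exact: cone_id.
Qed.

Lemma Irr_algebraic Y : algebraic Y -> Irr Y = #|cone @: [set q | cone_maximal Y q]|.
Proof.
move=> algY; apply: IrrE; apply/irr_decompP; split.
- by move=> _ /imsetP[q _ ->]; apply: cone_irreducible.
- apply/setP=> p; apply/idP/bigcupP => [pY|[_ /imsetP[q + ->]]].
    have [q maxq pq] := cone_maximal_cover algY pY.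
    by exists (cone q) => //; apply: imset_f; rewrite inE.
  by rewrite inE => /andP[qY _]; apply/subsetP/algebraic_cone_sub.
- move=> _ _ /imsetP[q1 + ->] /imsetP[q2 + ->]; rewrite !inE.
  move=> /andP[_ /forall_inP max1] /andP[q2Y _] sub12.
  have q1q2 : q1 \in cone q2 := subsetP sub12 q1 (cone_id q1).
  by apply/eqP; rewrite eqEsubset sub12 cone_sub // (implyP (max1 q2 q2Y) q1q2).
Qed.

End Cones.

Section SolutionComponents.
Variables (n L : nat) (A B : {set 'I_n}).
Implicit Types (s u : 'S_n) (p q : point n L.+1).

Definition shared_bottom s := [forall i, (s i == 0 :> nat) ==> (i \in A :&: B)].

Definition split_bottom s :=
  [forall i, ((s i == 0 :> nat) ==> (i \in A :\: B)) && ((s i == 1 :> nat) ==> (i \in B :\: A))].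

Definition bottom_perms := [set s | shared_bottom s || split_bottom s].

Definition level s i : nat := if shared_bottom s then nat_of_ord (s i) else (s i).-1.

Definition level_point s : point n L.+1 := [ffun i => inord (level s i)].

Lemma shared_bottomE s a : s a = 0 :> nat -> shared_bottom s = (a \in A :&: B).
Proof.
move=> sa0; apply/forallP/idP => [/(_ a)|aAB i]; first by rewrite sa0.
by apply/implyP=> /eqP si0; rewrite (perm_inj_nat (etrans si0 (esym sa0))).
Qed.

Lemma split_bottomE s a b : s a = 0 :> nat -> s b = 1 :> nat ->
  split_bottom s = (a \in A :\: B) && (b \in B :\: A).
Proof.
move=> sa0 sb1; apply/forallP/andP => [bot|[aAB bBA] i].
  by have := bot a; have := bot b; rewrite sa0 sb1 /= andbT.
apply/andP; split; apply/implyP=> /eqP si.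
  by rewrite (perm_inj_nat (etrans si (esym sa0))).
by rewrite (perm_inj_nat (etrans si (esym sb1))).
Qed.

Lemma split_bottom_lowA s k : split_bottom s -> s k <= 1 -> (k \in A) = (s k == 0 :> nat).
Proof.
move/forallP/(_ k); case: (nat_of_ord (s k)) => [|[|//]] /=; rewrite !inE.
  by rewrite andbT => /andP[_ ->].
by move=> /andP[/negbTE ->].
Qed.

Lemma split_bottom_lowB s k : split_bottom s -> s k <= 1 -> (k \in B) = (s k == 1 :> nat).
Proof.
move/forallP/(_ k); case: (nat_of_ord (s k)) => [|[|//]] /=; rewrite !inE.
  by rewrite andbT => /andP[/negbTE ->].
by move=> /andP[_ ->].
Qed.

Hypothesis n_gt1 : 1 < n.
Hypothesis n_leL : n <= L.+1.
Hypothesis AB_full : A :|: B = setT.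
Hypothesis A_neq0 : A != set0.
Hypothesis B_neq0 : B != set0.

Local Notation Y := (solutions L.+1 (A, B)).

Lemma split_bottom_level s i : split_bottom s -> level s i = (s i).-1.
Proof.
move=> split_s; have [a sa0] := perm_surj_nat s (ltnW n_gt1).
have [b sb1] := perm_surj_nat s n_gt1.
move: split_s; rewrite /level (shared_bottomE sa0) (split_bottomE sa0 sb1) !inE.
by case/andP=> /andP[/negbTE-> _] _; rewrite andbF.
Qed.

Lemma level_pointE s i : level_point s i = level s i :> nat.
Proof. by rewrite ffunE inordK // /level; have := ltn_ord (s i); case: ifP => _; lia. Qed.

Lemma level_point_sol s : s \in bottom_perms -> level_point s \in Y.
Proof.
have [a sa0] := perm_surj_nat s (ltnW n_gt1); have [b sb1] := perm_surj_nat s n_gt1.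
rewrite !inE /= => /orP[shared_s|split_s].
  have /setIP[aA aB] : a \in A :&: B by rewrite -(shared_bottomE sa0).
  have lp_a : level_point s a = 0 :> nat by rewrite level_pointE /level shared_s sa0.
  by rewrite (term_val_eq0 aA lp_a) (term_val_eq0 aB lp_a).
have := split_s; rewrite (split_bottomE sa0 sb1) => /andP[/setDP[aA _] /setDP[bB _]].
have lp_a : level_point s a = 0 :> nat by rewrite level_pointE split_bottom_level ?sa0.
have lp_b : level_point s b = 0 :> nat by rewrite level_pointE split_bottom_level ?sb1.
by rewrite (term_val_eq0 aA lp_a) (term_val_eq0 bB lp_b).
Qed.

Lemma solution_bottom p : p \in Y -> exists i1 j1,
  [/\ i1 \in A, j1 \in B, p i1 = p j1 :> nat & forall x, p i1 <= p x].
Proof.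
rewrite inE /= => /eqP tv_eq.
have [i1 i1A tvA] := term_val_attained p A_neq0; have [j1 j1B tvB] := term_val_attained p B_neq0.
exists i1, j1; split; rewrite // -tvA ?tv_eq // => x.
have : x \in A :|: B by rewrite AB_full inE.
by rewrite inE => /orP[] /(term_val_le p); rewrite ?tv_eq.
Qed.

Lemma level_point_maximal s : s \in bottom_perms -> cone_maximal Y (level_point s).
Proof.
move=> s_bot; rewrite /cone_maximal level_point_sol //=; apply/forall_inP=> p pY.
apply/implyP=> /coneP lp_mono; apply/coneP=> i j; rewrite !level_pointE => le_ij.
rewrite leqNgt; apply/negP=> lt_ji.
have eq_ij : level s i = level s j.
  by apply/eqP; rewrite eqn_leq le_ij -!level_pointE lp_mono // ltnW.
have [i1 [j1 [i1A j1B p_eq p_min]]] := solution_bottom pY.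
move: s_bot; rewrite inE => /orP[shared_s|split_s].
  move: eq_ij; rewrite /level shared_s => /perm_inj_nat eq_ij.
  by move: lt_ji; rewrite eq_ij ltnn.
have [a sa0] := perm_surj_nat s (ltnW n_gt1).
have low x : p x = p i1 :> nat -> s x <= 1.
  move=> p_x; have := lp_mono x a; rewrite !level_pointE !split_bottom_level // sa0 p_x p_min.
  by move/(_ isT); case: (nat_of_ord (s x)) => [|[]].
have s_i1 : s i1 = 0 :> nat by apply/eqP; rewrite -split_bottom_lowA ?low.
have s_j1 : s j1 = 1 :> nat by apply/eqP; rewrite -split_bottom_lowB ?low.
have bottom x : s x <= 1 -> p x = p i1 :> nat.
  case sx: (nat_of_ord (s x)) => [|[|//]] _.
    by rewrite (@perm_inj_nat _ s x i1) // s_i1.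
  by rewrite (@perm_inj_nat _ s x j1) // s_j1.
have ne_ij : s i != s j :> nat by apply: contraTneq lt_ji => /perm_inj_nat ->; rewrite ltnn.
move: eq_ij; rewrite !split_bottom_level // => eq_ij.
have [si sj] : s i <= 1 /\ s j <= 1 by lia.
by move: lt_ji; rewrite (bottom i si) (bottom j sj) ltnn.
Qed.

Lemma shared_level_cone q z :
  z \in A :&: B -> (forall x, q z <= q x) ->
  exists2 s, shared_bottom s & q \in cone (level_point s).
Proof.
move=> zAB q_min; pose key x := (q x).*2 + (x != z).
have [s s_ext] := exists_linear_extension key.
have s_z : s z = 0 :> nat.
  rewrite (perm_at_strict_key s_ext) => [|x]; last first.
    by rewrite /key eqxx; case: eqP => // _; have := q_min x; lia.
  apply/eqP; rewrite cards_eq0; apply/eqP/setP=> x; rewrite !inE /key eqxx.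
  by have := q_min x; lia.
have shared_s : shared_bottom s by rewrite (shared_bottomE s_z).
exists s => //; apply/coneP=> i j; rewrite !level_pointE /level shared_s.
by apply: (linear_extension_leq (f := fun x => nat_of_ord (q x)) s_ext) => {}i {}j; rewrite /key; lia.
Qed.

Lemma split_level_cone q i1 j1 :
    i1 \in A :\: B -> j1 \in B :\: A -> q i1 = q j1 :> nat -> (forall x, q i1 <= q x) ->
  exists2 s, split_bottom s & q \in cone (level_point s).
Proof.
move=> i1AB j1BA q_eq q_min.
have ne_ij1 : j1 != i1.
  by apply: contraTneq i1AB => <-; move: j1BA; rewrite !inE => /andP[/negbTE-> ->].
pose key x := q x * 3 + (if x == i1 then 0 else if x == j1 then 1 else 2).
have [s s_ext] := exists_linear_extension key.
have s_i1 : s i1 = 0 :> nat.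
  rewrite (perm_at_strict_key s_ext) => [|x]; last first.
    rewrite /key eqxx; case: (x =P i1) => // _; case: (x =P j1) => _; have := q_min x; lia.
  apply/eqP; rewrite cards_eq0; apply/eqP/setP=> x; rewrite !inE /key eqxx.
  by have := q_min x; lia.
have s_j1 : s j1 = 1 :> nat.
  rewrite (perm_at_strict_key s_ext) => [|x]; last first.
    rewrite /key eqxx (negbTE ne_ij1) -q_eq.
    by case: (x =P i1) => [->|_]; [lia|case: (x =P j1) => // _; have := q_min x; lia].
  rewrite -(cards1 i1); apply: eq_card => x; rewrite !inE /key eqxx (negbTE ne_ij1) -q_eq.
  case: (x =P i1) => [->|_]; first lia.
  by case: (x =P j1) => [->|_]; have := q_min x; lia.
have split_s : split_bottom s by rewrite (split_bottomE s_i1 s_j1) i1AB.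
have s_mono := linear_extension_leq (f := fun x => nat_of_ord (q x)) s_ext.
exists s => //; apply/coneP=> i j; rewrite !level_pointE !split_bottom_level //.
case: (leqP (s i) (s j)) => [le_ij _|lt_ji le_ij].
  by apply: s_mono le_ij => {}i {}j; rewrite /key; do 2 case: ifP => _; lia.
have [si sj] : s i = 1 :> nat /\ s j = 0 :> nat by lia.
by rewrite (@perm_inj_nat _ s i j1) ?s_j1 // (@perm_inj_nat _ s j i1) ?s_i1 // q_eq.
Qed.

Lemma solution_in_level_cone q :
  q \in Y -> exists2 s, s \in bottom_perms & q \in cone (level_point s).
Proof.
move=> qY; have [i1 [j1 [i1A j1B q_eq q_min]]] := solution_bottom qY.
case: (pickP [pred z | (z \in A :&: B) && (q z == q i1 :> nat)]) => [z /andP[zAB /eqP q_z]|none].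
  have [|s shared_s q_s] := shared_level_cone (q := q) zAB; first by move=> x; rewrite q_z.
  by exists s; rewrite // inE shared_s.
have i1AB : i1 \in A :\: B.
  by move: (none i1); rewrite /= !inE i1A eqxx /= andbT => ->.
have j1BA : j1 \in B :\: A.
  by move: (none j1); rewrite /= !inE j1B q_eq eqxx /= !andbT => ->.
have [s split_s q_s] := split_level_cone i1AB j1BA q_eq q_min.
by exists s; rewrite // inE split_s orbT.
Qed.

Lemma below_shared s k : shared_bottom s -> below (level s) k = s k.
Proof.
move=> shared_s; rewrite -[RHS](card_perm_lt s (ltnW (ltn_ord (s k)))).
by apply: eq_card => j; rewrite !inE /level shared_s.
Qed.

Lemma below_split s k : split_bottom s -> below (level s) k = if s k <= 1 then 0 else s k.
Proof.
move=> split_s; case: leqP => s_k.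
  by apply/eqP; rewrite cards_eq0; apply/eqP/setP=> j; rewrite !inE !split_bottom_level //; lia.
rewrite -[RHS](card_perm_lt s (ltnW (ltn_ord (s k)))).
by apply: eq_card => j; rewrite !inE !split_bottom_level //; lia.
Qed.

(* The two variables tied at level 0 by a split bottom are told apart by A. *)
Lemma perm_of_level s k : s \in bottom_perms ->
  s k = (if below (level s) k is 0 then k \notin A : nat else below (level s) k) :> nat.
Proof.
have [a sa0] := perm_surj_nat s (ltnW n_gt1).
rewrite inE => /orP[shared_s|split_s].
  rewrite below_shared //; case s_k: (nat_of_ord (s k)) => //.
  have := shared_s; rewrite (shared_bottomE sa0) (perm_inj_nat (etrans s_k (esym sa0))).
  by case/setIP=> ->.
rewrite below_split //; case: leqP => [s_k|]; last by case: (nat_of_ord (s k)).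
by rewrite (split_bottom_lowA split_s s_k); case: (nat_of_ord (s k)) s_k => [|[]].
Qed.

Lemma level_point_cone_inj : {in bottom_perms &, injective (fun s => cone (level_point s))}.
Proof.
move=> s u s_bot u_bot /cone_eq_leq le_eq; apply/permP=> k; apply: val_inj.
have le_level i j : (level s i <= level s j) = (level u i <= level u j).
  by rewrite -!level_pointE le_eq.
by rewrite /= (perm_of_level k s_bot) (perm_of_level k u_bot) (eq_below k le_level).
Qed.

Lemma Irr_solutions : Irr Y = #|bottom_perms|.
Proof.
have algY : algebraic Y by apply: algebraic_solutions; rewrite /is_equation A_neq0.
rewrite Irr_algebraic // -(card_in_imset level_point_cone_inj).
apply: eq_card => Z; apply/imsetP/imsetP => [[q]|[s s_bot ->]]; last first.
  by exists (level_point s); rewrite // inE level_point_maximal.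
rewrite inE => /andP[qY /forall_inP max_q] ->.
have [s s_bot q_s] := solution_in_level_cone qY; exists s => //=.
apply/eqP; rewrite eqEsubset !cone_sub //.
exact: implyP (max_q _ (level_point_sol s_bot)) q_s.
Qed.

End SolutionComponents.

Section EquationCount.
Variable n : nat.
Implicit Types (e : equation n) (F : {set 'I_n}) (c : 'I_n -> bool * bool).

Definition var_pattern e x := (x \in e.1, x \in e.2).

Definition nonzero_patterns : {set bool * bool} := [set~ (false, false)].

Definition pinned_patterns F c x := if x \in F then [set c x] else nonzero_patterns.

Lemma card_var_patterns (D : 'I_n -> {set bool * bool}) :
  #|[set e | [forall x, var_pattern e x \in D x]]| = \prod_x #|D x|.
Proof.
pose enc e : {ffun 'I_n -> bool * bool} := [ffun x => var_pattern e x].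
pose dec (f : {ffun 'I_n -> bool * bool}) : equation n :=
  ([set x | (f x).1], [set x | (f x).2]).
have encK : cancel enc dec by case=> A B; congr pair; apply/setP=> x; rewrite inE ffunE.
have decK : cancel dec enc.
  by move=> f; apply/ffunP=> x; rewrite ffunE /var_pattern !inE; case: (f x).
rewrite -(card_imset _ (can_inj encK)).
transitivity #|family (fun x => [pred y | y \in D x])|.
  apply: eq_card => f; apply/imsetP/familyP => [[e]|in_f].
    by rewrite inE => /forallP in_e -> x; rewrite ffunE inE.
  exists (dec f); rewrite ?decK // inE; apply/forallP=> x.
  by have := in_f x; rewrite -{1}(decK f) ffunE inE.
by rewrite card_family foldrE big_map big_enum.
Qed.

Lemma card_nonzero_patterns : #|nonzero_patterns| = 3.
Proof. by rewrite cardsC1 card_prod card_bool. Qed.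

Lemma forall_nonzero_patterns e :
  [forall x, var_pattern e x \in nonzero_patterns] = (e.1 :|: e.2 == setT).
Proof.
apply/forallP/eqP => [nz|e_full x].
  by apply/setP=> x; have := nz x; rewrite /var_pattern !inE; case: (x \in e.1); case: (x \in e.2).
by move/setP/(_ x): e_full; rewrite /var_pattern !inE; case: (x \in e.1); case: (x \in e.2).
Qed.

Lemma card_pinned_patterns F c :
  #|[set e | [forall x, var_pattern e x \in pinned_patterns F c x]]| = 3 ^ #|~: F|.
Proof.
rewrite card_var_patterns (bigID [in F]) /= big1 => [|x xF]; last by rewrite /pinned_patterns xF cards1.
rewrite mul1n (eq_bigr (fun=> 3)) => [|x /negbTE xF]; last first.
  by rewrite /pinned_patterns xF card_nonzero_patterns.
by rewrite prod_nat_const; congr (3 ^ _); apply: eq_card => x; rewrite !inE.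
Qed.

Lemma forall_pinned_patterns e F c : {in F, forall x, c x \in nonzero_patterns} ->
  [forall x, var_pattern e x \in pinned_patterns F c x] =
  [forall x in F, var_pattern e x == c x] && (e.1 :|: e.2 == setT).
Proof.
rewrite -forall_nonzero_patterns /pinned_patterns => cF.
apply/forallP/andP => [pinned|[/forall_inP e_F /forallP e_nz] x]; last first.
  by case: ifP => xF; [rewrite inE; apply: e_F | apply: e_nz].
split; first by apply/forall_inP=> x xF; have := pinned x; rewrite xF inE.
apply/forallP=> x; have := pinned x; case: ifP => // xF.
by rewrite inE => /eqP->; apply: cF.
Qed.

Lemma card_nonzero_equations :
  #|[set e | [forall x, var_pattern e x \in nonzero_patterns]]| = 3 ^ n.
Proof.
rewrite card_var_patterns (eq_bigr (fun=> 3)) => [|x _]; last exact: card_nonzero_patterns.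
by rewrite prod_nat_const card_ord.
Qed.

Lemma Eqn_nonzero_patterns : 0 < n ->
  Eqn n = [set e | [forall x, var_pattern e x \in nonzero_patterns]]
            :\: [set (set0, setT); (setT, set0)].
Proof.
move=> n_gt0; have T_neq0 : [set: 'I_n] != set0 := set_neq0 (in_setT (Ordinal n_gt0)).
apply/setP=> [[A B]]; rewrite !inE forall_nonzero_patterns /is_equation /= !xpair_eqE.
case: (A :|: B =P setT) => [AB_full|]; last by rewrite !andbF.
case: (A =P set0) AB_full => [-> /=|_]; first by rewrite set0U => ->; rewrite eqxx.
case: (B =P set0) => [-> /=|_]; first by rewrite setU0 => ->; rewrite eqxx.
by rewrite !andbF.
Qed.

Lemma card_Eqn : 0 < n -> #|Eqn n| = 3 ^ n - 2.
Proof.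
move=> n_gt0; have T_neq0 : [set: 'I_n] != set0 := set_neq0 (in_setT (Ordinal n_gt0)).
rewrite Eqn_nonzero_patterns // cardsD card_nonzero_equations (setIidPr _).
  by rewrite cards2 xpair_eqE eq_sym (negbTE T_neq0).
apply/subsetP=> e; rewrite !inE forall_nonzero_patterns.
by case/orP=> /eqP->; rewrite /= ?set0U ?setU0.
Qed.

Lemma card_bottom_equations (s : 'S_n) : 1 < n ->
  #|[set e in Eqn n | s \in bottom_perms e.1 e.2]| = 3 ^ n.-1 + 3 ^ n.-2.
Proof.
move=> n_gt1.
have [a sa0] := perm_surj_nat s (ltnW n_gt1); have [b sb1] := perm_surj_nat s n_gt1.
have ba : b != a by apply/eqP=> eq_ba; move: sb1; rewrite eq_ba sa0.
pose shared_pins := fun _ : 'I_n => (true, true).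
pose split_pins x := if x == a then (true, false) else (false, true).
have -> : [set e in Eqn n | s \in bottom_perms e.1 e.2] =
    [set e | [forall x, var_pattern e x \in pinned_patterns [set a] shared_pins x]] :|:
    [set e | [forall x, var_pattern e x \in pinned_patterns [set a; b] split_pins x]].
  apply/setP=> -[A B]; rewrite !inE !forall_pinned_patterns; last 2 first.
  - by move=> x _; rewrite !inE /split_pins; case: ifP.
  - by move=> x _; rewrite !inE.
  rewrite forall_in_set1 forall_in_set2 /var_pattern /split_pins eqxx (negbTE ba) /=.
  rewrite (shared_bottomE _ _ sa0) (split_bottomE _ _ sa0 sb1) /is_equation /= !inE.
  case aA: (a \in A); case aB: (a \in B); case bA: (b \in A); case bB: (b \in B);
    by rewrite /= ?andbF ?andbT ?orbF ?(set_neq0 aA) ?(set_neq0 aB) ?(set_neq0 bB).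
rewrite cardsU !card_pinned_patterns (_ : _ :&: _ = set0) ?cards0 ?subn0; last first.
  apply/setP=> e; rewrite !inE; apply/andP=> -[/forallP/(_ a) + /forallP/(_ a)].
  by rewrite /pinned_patterns set11 set21 /split_pins eqxx !inE => /eqP->.
by rewrite cardsC1 card_ord cardsCs setCK cards2 eq_sym ba card_ord subn2.
Qed.

End EquationCount.

Lemma sum_Irr_solutions n l : 1 < n -> n <= l ->
  \sum_(e in Eqn n) Irr (solutions l e) = 4 * n`! * 3 ^ (n - 2).
Proof.
case: l => [|L] n_gt1 n_le; first by move: (leq_trans n_gt1 n_le).
rewrite (eq_bigr (fun e => #|bottom_perms e.1 e.2|)) => [|[A B]]; last first.
  by rewrite inE /is_equation => /andP[/andP[A0 B0] /eqP AB_full]; apply: Irr_solutions.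
rewrite double_count_card (eq_bigr (fun=> 3 ^ n.-1 + 3 ^ n.-2)) => [|s _]; last first.
  exact: card_bottom_equations.
rewrite sum_nat_const card_Sn -subn2 (_ : n.-1 = (n - 2).+1) 1?expnS; lia.
Qed.

Local Open Scope ring_scope.

Theorem mainTheorem6 (n l : nat) (hn : (2 <= n)%N) (hnl : (n <= l)%N) :
  ((\sum_(e in Eqn n) Irr (solutions l e))%:R / (#|Eqn n|)%:R : rat)
  = ((4 * n`! * 3 ^ (n - 2))%N)%:R / ((3 ^ n - 2)%N)%:R.
Proof. by rewrite sum_Irr_solutions // card_Eqn // ltnW. Qed.
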